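(* Suppose $C_0$ is sufficiently large. Then for every outcome of the random choices, if $f_1,f_2,f_3,f_4\in\mathcal F$ satisfy $n_{f_1}+n_{f_2}=n_{f_3}+n_{f_4}$, then $\{f_1,f_2\}=\{f_3,f_4\}$. Consequently $S=\{n_f:f\in\mathcal F\}$ is always a Sidon set.
   Context: Generalised base notation: for a sequence $\boldsymbol b=(b_1,b_2,\dots)$ of integers $\ge 2$ and arbitrary integers $x_1,\dots,x_n$, write $[x_n\,\dots\,x_1]_{\boldsymbol b}:=x_1+x_2b_1+\dots+x_nb_1b_2\cdots b_{n-1}$. Standing data: Fix a prime $p$ and a set $A\subset\{1,\dots,\lfloor p/2\rfloor-1\}$ such that $A\cap(A+A+\{0,1\})=\emptyset$ and $A+A+A$ contains $p+2$ consecutive integers. Let $c=0.35$. Let $C_0>100p$ be a large absolute constant. Let $q\ge C_0$ be a prime power. For $d\ge1$ let $\mathcal I_d$ be the set of irreducible monic polynomials of degree $d$ in $\mathbb F_q[t]$. For $i\ge1$ let $g_i\in\mathcal I_{2i-1}$ be arbitrary and $\omega_i$ a generator of $(\mathbb F_q[t]/(g_i))^\times$. For $k\ge C_0$ let $\mathcal F_k:=\bigcup_{i:\,ck^2\le 2i<c(k+1)^2}\mathcal I_{2i}$ and $\mathcal F:=\bigcup_{k\ge C_0}\mathcal F_k$. Let $b_i=q^i-1$ for $i$ odd and $b_i=p$ for $i$ even. For $k\ge C_0$, $f\in\mathcal F_k$: $e_i(f)$ ($1\le i\le k$) is the unique integer with $0\le e_i(f)<q^{2i-1}-1$ and $\omega_i^{e_i(f)}\equiv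 f\pmod{g_i}$; $r_1(f),\dots,r_k(f)$ are uniform on $A$; $s(f)$ is uniform on $\{1,\dots,q^{3k}\}$; all these random variables (over all $f,i$) are independent. $n_f:=[s(f)\,r_k(f)\,e_k(f)\,\dots\,r_1(f)\,e_1(f)]_{\boldsymbol b}$, and $S:=\{n_f:f\in\mathcal F\}$. A Sidon set is a set of positive integers all of whose pairwise sums $s_1+s_2$ ($s_1\le s_2$) are distinct. *)

From mathcomp Require Import all_boot all_order all_algebra all_field.
Set Implicit Arguments. Unset Strict Implicit. Unset Printing Implicit Defensive.
Import GRing.Theory.
Local Open Scope ring_scope.

(* Generalised base notation: for xs = [:: x_1; x_2; ...; x_n],
   gbase b xs = x_1 + x_2 b_1 + ... + x_n b_1 ... b_{n-1}
   (b is indexed from 1: b_i = b i). *)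
Definition gbase (b : nat -> nat) (xs : seq nat) : nat :=
  (\sum_(j < size xs) nth 0%N xs j * \prod_(l < j) b l.+1)%N.

Definition bseq (q p : nat) (i : nat) : nat :=
  if odd i then (q ^ i - 1)%N else p.

Definition good_A (p : nat) (A : seq nat) : Prop :=
  (forall a, a \in A -> (1 <= a <= p./2 - 1)%N) /\
  (forall a b c t, a \in A -> b \in A -> c \in A -> (t <= 1)%N -> a != (b + c + t)%N) /\
  (exists m : nat, forall j, (j < p.+2)%N ->
     exists a b c, [/\ a \in A, b \in A, c \in A & (a + b + c = m + j)%N]).

Definition is_gen (F : finFieldType) (g w : {poly F}) : Prop :=
  coprimep w g /\ forall h : {poly F}, coprimep h g -> exists e : nat, g %| w ^+ e - h.

(* f \in F_k, with c = 0.35 = 7/20:  f monic irreducible of degree 2i with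
   c k^2 <= 2i < c (k+1)^2, i.e. 7 k^2 <= 40 i < 7 (k+1)^2. *)
Definition inFk (F : finFieldType) (k : nat) (f : {poly F}) : Prop :=
  f \is monic /\ irreducible_poly f /\
  exists i : nat, size f = (2 * i).+1 /\ (7 * k ^ 2 <= 40 * i)%N /\ (40 * i < 7 * k.+1 ^ 2)%N.

(* discrete log: the least e in [0, N) with w^e = f mod g
   (this is the unique such e when w generates the units and N = |units|). *)
Definition elog (F : finFieldType) (g w f : {poly F}) (N : nat) : nat :=
  find (fun e => g %| w ^+ e - f) (iota 0 N).

Definition nval (F : finFieldType) (p : nat) (g w : nat -> {poly F})
  (r : {poly F} -> nat -> nat) (s : {poly F} -> nat) (k : nat) (f : {poly F}) : nat :=
  gbase (bseq #|F| p)
    (flatten [seq [:: elog (g i) (w i) f (#|F| ^ (2 * i).-1 - 1)%N; r f i] | i <- iota 1 k]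
       ++ [:: s f]).

Definition Sidon (S : nat -> Prop) : Prop :=
  (forall n, S n -> (0 < n)%N) /\
  (forall a b c d, S a -> S b -> S c -> S d -> (a <= b)%N -> (c <= d)%N ->
     (a + b = c + d)%N -> a = c /\ b = d).

From Pilot Require Import Defs.
From mathcomp Require Import all_boot all_order all_algebra all_field.
From mathcomp Require Import qpoly qfpoly zify ring.
Set Implicit Arguments. Unset Strict Implicit. Unset Printing Implicit Defensive.
Import GRing.Theory.

(* n_f is written in the generalised base b, with digits (from the lowest)
   e_1, r_1, ..., e_k, r_k, s, where e_i is the discrete logarithm of f modulo
   g_i and b_(2i-1) = q^(2i-1) - 1, b_(2i) = p.  Suppose
   n_f1 + n_f2 = n_f3 + n_f4 and let m be the smallest of the four indices.
   - Every r-digit is below p/2, so the digits below an e-digit never carry: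
     when all indices exceed j the e_(j+1)-digits add up to the same value
     modulo q^(2j+1) - 1, i.e. f1 f2 = f3 f4 modulo g_(j+1).  When all indices
     are close to m, g_1 ... g_m (of degree m^2) exceeds the degrees, so
     f1 f2 = f3 f4 and unique factorisation pairs up the f_i.
   - Three large indices against one small one: comparing r-digits gives
     r = r' + r'' + carry, impossible since A and A + A + {0,1} are disjoint.
   - Two large against two small: the large ones agree modulo many g_j, hence
     are equal (unless both are below sqrt(5/3) m, handled as above). *)

Definition place (b : nat -> nat) (t : nat) : nat := (\prod_(l < t) b l.+1)%N.

Section MixedRadix.
Variable b : nat -> nat.

Lemma place0 : place b 0 = 1%N.
Proof. by rewrite /place big_ord0. Qed.

Lemma placeS t : place b t.+1 = (place b t * b t.+1)%N.
Proof. by rewrite /place big_ord_recr. Qed.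

Lemma place_dvd t n : (place b t %| place b (t + n))%N.
Proof.
elim: n => [|n IH]; first by rewrite addn0.
by rewrite addnS placeS dvdn_mulr.
Qed.

Lemma gbase_rcons xs x :
  gbase b (rcons xs x) = (gbase b xs + x * place b (size xs))%N.
Proof.
rewrite /gbase size_rcons big_ord_recr /= nth_rcons ltnn eqxx; congr (_ + _)%N.
by apply: eq_bigr => i _; rewrite nth_rcons ltn_ord.
Qed.

Lemma gbase_take_succ xs t : (t < size xs)%N ->
  gbase b (take t.+1 xs) = (gbase b (take t xs) + nth 0%N xs t * place b t)%N.
Proof. by move=> ht; rewrite (take_nth 0%N ht) gbase_rcons size_take ht. Qed.

Lemma gbase_take_split xs t : (t <= size xs)%N ->
  exists H, gbase b xs = (gbase b (take t xs) + place b t * H)%N.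
Proof.
move=> ht.
suff split_n : forall n, (t + n <= size xs)%N ->
    exists H, gbase b (take (t + n) xs) = (gbase b (take t xs) + place b t * H)%N.
  by have := split_n (size xs - t)%N; rewrite subnKC // take_size; apply.
elim=> [|n IH] hn; first by exists 0%N; rewrite muln0 !addn0.
have hlt : (t + n < size xs)%N by rewrite -addnS.
have [H EH] := IH (ltnW hlt).
have [c Ec] := dvdnP (place_dvd t n).
exists (H + nth 0%N xs (t + n) * c)%N.
by rewrite addnS gbase_take_succ // EH Ec; lia.
Qed.

Lemma gbase_lt xs : (forall i, i < size xs -> nth 0%N xs i < b i.+1)%N ->
  (gbase b xs < place b (size xs))%N.
Proof.
elim/last_ind: xs => [|xs x IH] hd; first by rewrite /gbase big_ord0 place0.
have hxs : (forall i, i < size xs -> nth 0%N xs i < b i.+1)%N.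
  move=> i hi; have := hd i; rewrite size_rcons nth_rcons hi; apply; exact: ltnW.
have hx : (x < b (size xs).+1)%N.
  by have := hd (size xs); rewrite size_rcons nth_rcons ltnn eqxx; apply.
have hlow := IH hxs.
rewrite gbase_rcons size_rcons placeS.
have : (x * place b (size xs) <= (b (size xs).+1 - 1) * place b (size xs))%N.
  by rewrite leq_mul2r; apply/orP; right; lia.
nia.
Qed.

Hypothesis b_ge2 : forall t, (2 <= b t.+1)%N.

Lemma place_gt0 t : (0 < place b t)%N.
Proof.
elim: t => [|t IH]; first by rewrite place0.
by rewrite placeS muln_gt0 IH; have := b_ge2 t; lia.
Qed.

Lemma place_double t : (2 * place b t <= place b t.+1)%N.
Proof. by rewrite placeS mulnC leq_mul. Qed.

Lemma place_mono t u : (t <= u)%N -> (place b t <= place b u)%N.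
Proof.
move=> htu; rewrite -(subnKC htu).
elim: (u - t)%N => [|n IH]; first by rewrite addn0.
rewrite addnS; apply: leq_trans IH _.
by have := place_double (t + n); lia.
Qed.

Lemma place_double_lt t u : (t < u)%N -> (2 * place b t <= place b u)%N.
Proof. by move=> htu; apply: leq_trans (place_double t) (place_mono htu). Qed.

End MixedRadix.

Lemma divmod_uniq P X Y X' Y' : (X + P * Y = X' + P * Y')%N ->
  (X < P)%N -> (X' < P)%N -> X = X' /\ Y = Y'.
Proof.
move=> E hX hX'.
have HY : Y = Y'.
  case: (ltngtP Y Y') => // hY.
  - have : (P * Y.+1 <= P * Y')%N by rewrite leq_mul2l hY orbT.
    rewrite mulnS; lia.
  - have : (P * Y'.+1 <= P * Y)%N by rewrite leq_mul2l hY orbT.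
    rewrite mulnS; lia.
by split=> //; subst; lia.
Qed.

(* Adding two numbers written with a lower digit below B and a next digit
   below p: the next digit of the sum is the sum of next digits plus a
   carry of 0 or 1. *)
Lemma two_digit_carry B p a1 b1 H1 a b H :
  (a1 < B)%N -> (a < 2 * B)%N -> (b1 < p)%N -> (b.+1 < p)%N ->
  (a1 + B * (b1 + p * H1) = a + B * (b + p * H))%N ->
  exists2 c, (c <= 1)%N & b1 = (b + c)%N.
Proof.
move=> ha1 ha hb1 hb E.
have [haB | hBa] := ltnP a B.
  have [_ E'] := divmod_uniq E ha1 haB.
  have [-> _] := divmod_uniq E' hb1 (ltnW hb).
  by exists 0%N; rewrite ?addn0.
have E1 : (a1 + B * (b1 + p * H1) = (a - B) + B * (b.+1 + p * H))%N by nia.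
have haB : (a - B < B)%N by lia.
have [_ E'] := divmod_uniq E1 ha1 haB.
by have [-> _] := divmod_uniq E' hb1 hb; exists 1%N; rewrite ?addn1.
Qed.

Section FiniteFieldPoly.
Local Open Scope ring_scope.
Variable F : finFieldType.
Implicit Types g h w f : {poly F}.

(* Fermat's little theorem in the field F[t]/(g) of order q^deg g. *)
Lemma poly_fermat g h : g \is monic -> irreducible_poly g ->
  g %| h ^+ (#|F| ^ (size g).-1)%N - h.
Proof.
move=> gm gi; have gI : monic_irreducible_poly g by [].
have frob := expf_card (in_qpoly g h : {poly %/ g with gI}).
rewrite card_qfpoly in frob.
have E : in_qpoly g (h ^+ (#|F| ^ (size g).-1)%N - h) = 0 :> {poly %/ g with gI}.
  by rewrite rmorphB rmorphXn /= frob subrr.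
have := congr1 (fun z : {poly %/ g with gI} => (z : {poly F})) E.
by rewrite /= /in_qpoly /= (mk_monicE gI) -(Pdiv.IdomainMonic.modpE gm) => /modp_eq0P.
Qed.

Lemma unit_order_dvd g w : g \is monic -> irreducible_poly g -> coprimep w g ->
  g %| w ^+ (#|F| ^ (size g).-1 - 1)%N - 1.
Proof.
move=> gm gi cw.
have := poly_fermat w gm gi.
have hQ : (0 < #|F| ^ (size g).-1)%N by rewrite expn_gt0 (ltnW (finNzRing_gt1 F)).
rewrite -{1}(subnK hQ) addn1 exprS.
have -> : w * w ^+ (#|F| ^ (size g).-1 - 1) - w =
          w * (w ^+ (#|F| ^ (size g).-1 - 1) - 1) by ring.
by rewrite Gauss_dvdpr // coprimep_sym.
Qed.

Lemma dvdp_expr_mod g w N a : g %| w ^+ N - 1 -> g %| w ^+ a - w ^+ (a %% N).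
Proof.
move=> hN; rewrite {1}(divn_eq a N) exprD exprM exprAC.
have -> : (w ^+ N) ^+ (a %/ N) * w ^+ (a %% N) - w ^+ (a %% N)
        = ((w ^+ N) ^+ (a %/ N) - 1) * w ^+ (a %% N) by ring.
by rewrite dvdp_mulr // subrX1 dvdp_mulr.
Qed.

Lemma dvdp_expr_congr g w N a a' : g %| w ^+ N - 1 -> (a = a' %[mod N])%N ->
  g %| w ^+ a - w ^+ a'.
Proof.
move=> hN haa'.
have -> : w ^+ a - w ^+ a' = (w ^+ a - w ^+ (a %% N)) - (w ^+ a' - w ^+ (a' %% N)).
  by rewrite haa'; ring.
by rewrite dvdp_sub // dvdp_expr_mod.
Qed.

Lemma elog_spec g w f : g \is monic -> irreducible_poly g -> is_gen g w ->
  coprimep f g -> let N := (#|F| ^ (size g).-1 - 1)%N in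
  (elog g w f N < N)%N /\ g %| w ^+ (elog g w f N) - f.
Proof.
move=> gm gi [cw gen] cf N.
have hN := unit_order_dvd gm gi cw.
have [e he] := gen f cf.
have N_gt0 : (0 < N)%N.
  have h1 : (1 < size g)%N by case: gi.
  have h2 : (1 < #|F|)%N := finNzRing_gt1 F.
  by rewrite /N subn_gt0 -(expn0 #|F|) ltn_exp2l // -subn1 subn_gt0.
have he' : g %| w ^+ (e %% N) - f.
  have -> : w ^+ (e %% N) - f = (w ^+ e - f) - (w ^+ e - w ^+ (e %% N)) by ring.
  by rewrite dvdp_sub // dvdp_expr_mod.
have hhas : has (fun e => g %| w ^+ e - f) (iota 0 N).
  by apply/hasP; exists (e %% N)%N; rewrite // mem_iota add0n ltn_pmod.
have hfind : (elog g w f N < N)%N by rewrite /elog -{2}(size_iota 0 N) -has_find.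
by split=> //; have := nth_find 0%N hhas; rewrite nth_iota ?add0n.
Qed.

Lemma coprimep_irr_size f g : irreducible_poly f -> irreducible_poly g ->
  size f != size g -> coprimep f g.
Proof.
move=> fi gi hs; rewrite irreducible_poly_coprime //; apply/negP => hfg.
have hf1 : size f != 1%N by case: fi => h _; rewrite neq_ltn h orbT.
by have /eqp_size hs' := apply_irredp gi hf1 hfg; rewrite hs' eqxx in hs.
Qed.

Lemma monic_irr_pair_eq f1 f2 f3 f4 :
  f1 \is monic -> f2 \is monic -> f3 \is monic -> f4 \is monic ->
  irreducible_poly f1 -> irreducible_poly f3 -> irreducible_poly f4 ->
  f1 * f2 = f3 * f4 -> (f1 = f3 /\ f2 = f4) \/ (f1 = f4 /\ f2 = f3).
Proof.
move=> m1 m2 m3 m4 i1 i3 i4 E.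
have hf1 : size f1 != 1%N by case: i1 => h _; rewrite neq_ltn h orbT.
have nz1 : f1 != 0 by apply: monic_neq0.
have f1_dvd34 : f1 %| f3 * f4 by rewrite -E dvdp_mulr.
have eq_of_dvd f : f \is monic -> irreducible_poly f -> f1 %| f -> f1 = f.
  by move=> mf irf hd; apply/eqP; rewrite -eqp_monic //; apply: apply_irredp.
have [h13 | n13] := boolP (f1 %| f3).
  have e13 := eq_of_dvd f3 m3 i3 h13.
  by left; split=> //; apply: (mulfI nz1); rewrite E e13.
have c13 : coprimep f1 f3 by rewrite irreducible_poly_coprime // n13.
have h14 : f1 %| f4 by rewrite -(Gauss_dvdpr _ c13).
have e14 := eq_of_dvd f4 m4 i4 h14.
by right; split=> //; apply: (mulfI nz1); rewrite E e14 mulrC.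
Qed.

End FiniteFieldPoly.

Section DegreeBlock.
Local Open Scope ring_scope.
Variable F : finFieldType.
Variable g : nat -> {poly F}.
Hypothesis g_spec : forall i, (0 < i)%N ->
  [/\ g i \is monic, irreducible_poly (g i) & size (g i) = (2 * i)%N].

Lemma block_prod_dvd (h : {poly F}) a n : (0 < a)%N ->
  (forall j, (a <= j < a + n)%N -> g j %| h) ->
  let Q := \prod_(i < n) g (a + i) in
  [/\ Q \is monic, size Q = (((a - 1 + n) ^ 2 - (a - 1) ^ 2).+1)%N,
      (forall j, (a + n <= j)%N -> coprimep Q (g j)) & Q %| h].
Proof.
move=> ha; elim: n => [|n IH] hd Q.
  rewrite /Q big_ord0 monic1 size_poly1 addn0 subnn dvd1p.
  by split=> // j _; rewrite coprime1p.
have hd' : forall j, (a <= j < a + n)%N -> g j %| h.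
  by move=> j /andP[h1 h2]; apply: hd; rewrite h1 addnS ltnS ltnW.
have [m1 s1 c1 d1] := IH hd'.
have [mg ig sg] := g_spec (ltn_addr n ha).
have cQg := c1 (a + n)%N (leqnn _).
rewrite /Q big_ord_recr /=; split.
- by rewrite monicMl.
- rewrite size_monicM ?monic_neq0 // s1 sg.
  have -> : (a - 1 + n.+1 = (a - 1 + n).+1)%N by lia.
  rewrite !expnS !expn0 !muln1; nia.
- move=> j hj; rewrite coprimepMl c1 /=; last by lia.
  have j_gt0 : (0 < j)%N by lia.
  have [_ ij sj] := g_spec j_gt0.
  by apply: coprimep_irr_size => //; rewrite sg sj; apply/eqP; lia.
- by rewrite Gauss_dvdp // d1 hd //; lia.
Qed.

Lemma block_dvd_small (h : {poly F}) a n : (0 < a)%N ->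
  (forall j, (a <= j < a + n)%N -> g j %| h) ->
  (size h <= (a - 1 + n) ^ 2 - (a - 1) ^ 2)%N -> h = 0.
Proof.
move=> ha hd hs; apply/eqP; apply: contraTT hs => hn.
have [_ sQ _ dQ] := block_prod_dvd ha hd.
by rewrite -ltnNge -ltnS -sQ; apply: dvdp_leq.
Qed.

End DegreeBlock.

Lemma dvdp_prod_of_log (F : finFieldType) (g w f1 f2 f3 f4 : {poly F}) N a1 a2 a3 a4 :
  (g %| w ^+ N - 1 -> (a1 + a2 = a3 + a4 %[mod N])%N ->
  g %| w ^+ a1 - f1 -> g %| w ^+ a2 - f2 -> g %| w ^+ a3 - f3 -> g %| w ^+ a4 - f4 ->
  g %| f1 * f2 - f3 * f4)%R.
Proof.
move=> hN hmod d1 d2 d3 d4.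
have hw := dvdp_expr_congr hN hmod; rewrite !exprD in hw.
have -> : (f1 * f2 - f3 * f4 = (w ^+ a1 - f1) * (- f2) + (w ^+ a2 - f2) * (- w ^+ a1)
    + (w ^+ a1 * w ^+ a2 - w ^+ a3 * w ^+ a4) * 1 + (w ^+ a3 - f3) * f4
    + (w ^+ a4 - f4) * w ^+ a3)%R by ring.
by rewrite !dvdp_add ?dvdp_mulr.
Qed.

Lemma size_interleave (a c : nat -> nat) st k :
  size (flatten [seq [:: a i; c i] | i <- iota st k]) = (2 * k)%N.
Proof. by elim: k st => [|k IH] st //=; rewrite IH; lia. Qed.

Lemma nth_interleave (a c : nat -> nat) st k j : (j < k)%N ->
  nth 0%N (flatten [seq [:: a i; c i] | i <- iota st k]) (2 * j) = a (st + j)%N /\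
  nth 0%N (flatten [seq [:: a i; c i] | i <- iota st k]) (2 * j).+1 = c (st + j)%N.
Proof.
elim: k st j => [|k IH] st j //= hj.
case: j hj => [|j] hj; first by rewrite muln0 addn0.
have [E1 E2] := IH st.+1 j hj.
have -> : (2 * j.+1 = (2 * j).+2)%N by lia.
by rewrite /= E1 E2 addSnnS.
Qed.

Section Construction.
Variables (p : nat) (A : seq nat) (F : finFieldType) (g w : nat -> {poly F})
  (r : {poly F} -> nat -> nat) (s : {poly F} -> nat) (C0 : nat).
Hypothesis p_ge2 : (2 <= p)%N.
Hypothesis A_small : forall a, a \in A -> (a <= p./2 - 1)%N.
Hypothesis A_sumfree : forall a b c t, a \in A -> b \in A -> c \in A ->
  (t <= 1)%N -> a != (b + c + t)%N.
Hypothesis C0_large : (200 <= C0)%N.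
Hypothesis q_large : (C0 <= #|F|)%N.
Hypothesis g_spec : forall i : nat, (0 < i)%N ->
  [/\ g i \is monic, irreducible_poly (g i), size (g i) = (2 * i)%N & is_gen (g i) (w i)].
Hypothesis rs_spec : forall (k : nat) (f : {poly F}), (C0 <= k)%N -> inFk k f ->
  (forall i, (1 <= i <= k)%N -> r f i \in A) /\ (1 <= s f <= #|F| ^ (3 * k))%N.

Local Notation q := #|F|.

Definition radix := Defs.bseq #|F| p.
Local Notation P := (place radix).

Definition dlog (f : {poly F}) i := elog (g i) (w i) f (#|F| ^ (2 * i).-1 - 1).
Definition digits k f := flatten [seq [:: dlog f i; r f i] | i <- iota 1 k] ++ [:: s f].
Local Notation nf k f := (nval p g w r s k f).

Definition low k f t := gbase radix (take t (digits k f)).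

Definition adm k (f : {poly F}) := (C0 <= k)%N /\ inFk k f.

Lemma size_digits k f : size (digits k f) = (2 * k).+1.
Proof. by rewrite /digits size_cat size_interleave addn1. Qed.

Lemma nth_digits k f j : (j < k)%N ->
  nth 0%N (digits k f) (2 * j) = dlog f j.+1 /\
  nth 0%N (digits k f) (2 * j).+1 = r f j.+1.
Proof.
move=> hj; rewrite /digits !nth_cat size_interleave.
have -> : (2 * j < 2 * k)%N by lia.
have -> : ((2 * j).+1 < 2 * k)%N by lia.
exact: nth_interleave.
Qed.

Lemma nth_digits_top k f : nth 0%N (digits k f) (2 * k) = s f.
Proof. by rewrite /digits nth_cat size_interleave ltnn subnn. Qed.

Lemma q_ge200 : (200 <= q)%N.
Proof. exact: leq_trans C0_large q_large. Qed.

Lemma radix_odd j : radix (2 * j).+1 = (q ^ (2 * j).+1 - 1)%N.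
Proof. by rewrite /radix /Defs.bseq /= oddM. Qed.

Lemma radix_even j : radix (2 * j).+2 = p.
Proof. by rewrite /radix /Defs.bseq /= oddM. Qed.

Lemma radix_ge2 t : (2 <= radix t.+1)%N.
Proof.
rewrite /radix /Defs.bseq; case: ifP => _ //.
have : (q ^ 1 <= q ^ t.+1)%N by rewrite leq_exp2l //; have := q_ge200; lia.
by rewrite expn1; have := q_ge200; lia.
Qed.

Local Notation P_gt0 := (place_gt0 radix_ge2).
Local Notation P_mono := (place_mono radix_ge2).
Local Notation P_double_lt := (place_double_lt radix_ge2).

(* An r-digit is at most p/2 - 1, so two of them plus a carry stay below p. *)
Lemma p_half : (2 * p./2 <= p /\ 1 <= p./2)%N.
Proof. by have := odd_double_half p; case: (odd p) => /= E; lia. Qed.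

Lemma adm_rA k f j : adm k f -> (j < k)%N -> r f j.+1 \in A.
Proof. by move=> [hk hf] hj; have [hr _] := rs_spec hk hf; apply: hr; lia. Qed.

Lemma adm_r_le k f j : adm k f -> (j < k)%N -> (r f j.+1 <= p./2 - 1)%N.
Proof. by move=> hkf hj; apply/A_small/(adm_rA hkf hj). Qed.

Lemma adm_s k f : adm k f -> (1 <= s f <= q ^ (3 * k))%N.
Proof. by move=> [hk hf]; have [_ hs] := rs_spec hk hf. Qed.

Lemma adm_size k f : adm k f -> exists i, size f = (2 * i).+1 /\
  (7 * k ^ 2 <= 40 * i)%N /\ (40 * i < 7 * k.+1 ^ 2)%N.
Proof. by case=> _ [_ [_ H]]. Qed.

Lemma adm_monic k f : adm k f -> f \is monic.
Proof. by case=> _ []. Qed.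

Lemma adm_irr k f : adm k f -> irreducible_poly f.
Proof. by case=> _ [_ []]. Qed.

(* The index k is determined by f, through the degree of f. *)
Lemma adm_index_uniq k k' f : adm k f -> adm k' f -> k = k'.
Proof.
move=> hkf hkf'.
have [i [Ei [i1 i2]]] := adm_size hkf; have [i' [Ei' [i1' i2']]] := adm_size hkf'.
have ii : i = i' by move: Ei; rewrite Ei' => [[]]; lia.
subst i'; case: (ltngtP k k') => // hk.
- have : (k.+1 ^ 2 <= k' ^ 2)%N by rewrite leq_exp2r.
  lia.
- have : (k'.+1 ^ 2 <= k ^ 2)%N by rewrite leq_exp2r.
  lia.
Qed.

Lemma adm_size_le k f K : adm k f -> (k <= K)%N -> (20 * size f < 7 * K.+1 ^ 2 + 20)%N.
Proof.
move=> hkf hK; have [i [-> [_ hi]]] := adm_size hkf.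
have : (k.+1 ^ 2 <= K.+1 ^ 2)%N by rewrite leq_exp2r.
lia.
Qed.

(* The digit e_(j+1) is a discrete logarithm of f modulo g_(j+1), which is
   coprime to f since the degrees 2(j+1) and deg f are of different parity. *)
Lemma adm_dlog k f j : adm k f ->
  (dlog f j.+1 < radix (2 * j).+1)%N /\ (g j.+1 %| w j.+1 ^+ dlog f j.+1 - f)%R.
Proof.
move=> hkf; have [gm gi gs gg] := g_spec (ltn0Sn j).
have cf : coprimep f (g j.+1).
  apply: coprimep_irr_size => //; first exact: adm_irr hkf.
  by have [i [-> _]] := adm_size hkf; rewrite gs; apply/eqP; lia.
have E : (2 * j.+1).-1 = (2 * j).+1 by lia.
by rewrite /dlog radix_odd -E -gs; apply: elog_spec.
Qed.

Lemma adm_digit_lt k f t : adm k f -> (t < 2 * k)%N ->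
  (nth 0%N (digits k f) t < radix t.+1)%N.
Proof.
move=> hkf ht.
have [j [hj [->|->]]] : exists j, (j < k)%N /\ (t = 2 * j \/ t = (2 * j).+1)%N.
  exists t./2; split; first by rewrite ltn_half_double; lia.
  by have := odd_double_half t; case: (odd t) => /= E; [right|left]; lia.
- by have [-> _] := nth_digits f hj; exact: (adm_dlog j hkf).1.
- have [_ ->] := nth_digits f hj; rewrite radix_even.
  by have := adm_r_le hkf hj; have := p_half; lia.
Qed.

Lemma low_succ k f t : (t <= 2 * k)%N ->
  low k f t.+1 = (low k f t + nth 0%N (digits k f) t * P t)%N.
Proof. by move=> ht; rewrite /low gbase_take_succ // size_digits. Qed.

Lemma low_lt k f t : adm k f -> (t <= 2 * k)%N -> (low k f t < P t)%N.
Proof.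
move=> hkf ht; have hsz : size (take t (digits k f)) = t.
  by rewrite size_takel // size_digits; lia.
rewrite /low -{2}hsz; apply: gbase_lt => i; rewrite hsz => hi.
by rewrite nth_take //; apply: (adm_digit_lt hkf); lia.
Qed.

Lemma nval_low k f : nf k f = low k f (2 * k).+1.
Proof. by rewrite /low -(size_digits k f) take_size. Qed.

Lemma nval_split k f t : (t <= (2 * k).+1)%N ->
  exists H, nf k f = (low k f t + P t * H)%N.
Proof. by move=> ht; apply: gbase_take_split; rewrite size_digits. Qed.

(* Since r-digits are below p/2, the digits below an e-digit contribute less
   than half the place value, and leave room for one more lower place. *)
Lemma low_even_bound k f j : adm k f -> (j <= k)%N ->
  (2 * low k f (2 * j) < P (2 * j))%N /\
  (0 < j -> low k f (2 * j) + P (2 * j).-1 <= P (2 * j))%N.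
Proof.
move=> hkf; case: j => [|j] hj; first by rewrite muln0 /low take0 /gbase big_ord0 place0.
have -> : (2 * j.+1 = (2 * j).+2)%N by lia.
rewrite /= low_succ; last by lia.
have [_ ->] := nth_digits f hj.
have h1 : (low k f (2 * j).+1 < P (2 * j).+1)%N by apply: low_lt hkf _; lia.
have h2 := adm_r_le hkf hj.
rewrite [P (2 * j).+2]placeS radix_even /=.
have := p_half; nia.
Qed.

(* The top digit s <= q^(3k) fits below the place 2k+3. *)
Lemma top_digit_room k :
  (q ^ (3 * k) + 1 <= radix (2 * k).+1 * radix (2 * k).+2 * radix (2 * k.+1).+1)%N.
Proof.
rewrite radix_odd radix_even radix_odd; have hq := q_ge200.
have pow_le m n : (m <= n)%N -> (q ^ m <= q ^ n.+1 - 1)%N.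
  move=> hmn; have h1 : (q ^ m <= q ^ n)%N by rewrite leq_exp2l //; lia.
  have h2 : (0 < q ^ m)%N by rewrite expn_gt0; lia.
  by rewrite expnS; nia.
have h1 := pow_le (2 * k)%N (2 * k)%N (leqnn _).
have h2 : (q ^ k <= q ^ (2 * k.+1).+1 - 1)%N by apply: pow_le; lia.
have -> : (q ^ (3 * k) = q ^ (2 * k) * q ^ k)%N by rewrite -expnD; congr (_ ^ _); lia.
apply: leq_trans (leq_mul (leq_mul h1 p_ge2) h2).
have : (0 < q ^ (2 * k) * q ^ k)%N by rewrite muln_gt0 !expn_gt0; lia.
nia.
Qed.

Lemma nval_ge k f : adm k f -> (P (2 * k) <= nf k f)%N.
Proof.
move=> hkf; rewrite nval_low low_succ // nth_digits_top.
by have := adm_s hkf; have := P_gt0 (2 * k); nia.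
Qed.

Lemma nval_lt k f : adm k f -> (nf k f < P (2 * k).+3)%N.
Proof.
move=> hkf; rewrite nval_low low_succ // nth_digits_top.
have hlow := low_lt hkf (leqnn (2 * k)).
have [_ hs] := andP (adm_s hkf).
have -> : P (2 * k).+3 =
    (P (2 * k) * (radix (2 * k).+1 * radix (2 * k).+2 * radix (2 * k.+1).+1))%N.
  have E : (2 * k.+1).+1 = (2 * k).+3 by lia.
  by rewrite E !placeS -!mulnA.
have := top_digit_room k; set R := (radix _ * _ * _)%N.
by have := P_gt0 (2 * k); nia.
Qed.

Lemma nval_expand_e k f j : (j < k)%N -> exists H,
  nf k f = (low k f (2 * j) + P (2 * j) * (dlog f j.+1 + radix (2 * j).+1 * H))%N.
Proof.
move=> hj; have ht : ((2 * j).+1 <= (2 * k).+1)%N by lia.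
have [H ->] := nval_split f ht.
exists H; rewrite low_succ; last by lia.
by have [-> _] := nth_digits f hj; rewrite placeS; ring.
Qed.

Lemma nval_expand_r k f j : (j < k)%N -> exists H,
  nf k f = (low k f (2 * j) +
            P (2 * j) * (dlog f j.+1 + radix (2 * j).+1 * (r f j.+1 + p * H)))%N.
Proof.
move=> hj; have ht : ((2 * j).+2 <= (2 * k).+1)%N by lia.
have [H ->] := nval_split f ht.
exists H; rewrite low_succ; last by lia.
rewrite low_succ; last by lia.
have [-> ->] := nth_digits f hj.
by rewrite [P (2 * j).+2]placeS radix_even [P (2 * j).+1]placeS; ring.
Qed.

Lemma index_le_of_lt k f t : adm k f -> (nf k f < 2 * P t)%N -> (2 * k <= t)%N.
Proof.
move=> hkf hlt; case: (leqP (2 * k) t) => // hkt.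
by have := P_double_lt hkt; have := nval_ge hkf; lia.
Qed.

Lemma g_unit_order j : (g j.+1 %| w j.+1 ^+ radix (2 * j).+1 - 1)%R.
Proof.
have [gm gi gs [cw _]] := g_spec (ltn0Sn j).
have := unit_order_dvd gm gi cw; rewrite gs radix_odd.
by have -> : (2 * j.+1).-1 = (2 * j).+1 by lia.
Qed.

(* If all four indices exceed j, the digits below place 2j sum to less than
   P_(2j) on each side, so the e_(j+1)-digits add up to the same value
   modulo b_(2j+1). *)
Lemma dlog_sum_congr k1 f1 k2 f2 k3 f3 k4 f4 j :
  adm k1 f1 -> adm k2 f2 -> adm k3 f3 -> adm k4 f4 ->
  (j < k1)%N -> (j < k2)%N -> (j < k3)%N -> (j < k4)%N ->
  (nf k1 f1 + nf k2 f2 = nf k3 f3 + nf k4 f4)%N ->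
  (dlog f1 j.+1 + dlog f2 j.+1 = dlog f3 j.+1 + dlog f4 j.+1 %[mod radix (2 * j).+1])%N.
Proof.
move=> a1 a2 a3 a4 j1 j2 j3 j4 E.
have [H1 E1] := nval_expand_e f1 j1; have [H2 E2] := nval_expand_e f2 j2.
have [H3 E3] := nval_expand_e f3 j3; have [H4 E4] := nval_expand_e f4 j4.
have [l1 _] := low_even_bound a1 (ltnW j1); have [l2 _] := low_even_bound a2 (ltnW j2).
have [l3 _] := low_even_bound a3 (ltnW j3); have [l4 _] := low_even_bound a4 (ltnW j4).
set B := radix (2 * j).+1 in E1 E2 E3 E4 *.
have Eq : (low k1 f1 (2 * j) + low k2 f2 (2 * j) +
             P (2 * j) * (dlog f1 j.+1 + dlog f2 j.+1 + B * (H1 + H2)) =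
           low k3 f3 (2 * j) + low k4 f4 (2 * j) +
             P (2 * j) * (dlog f3 j.+1 + dlog f4 j.+1 + B * (H3 + H4)))%N.
  by move: E; rewrite E1 E2 E3 E4; lia.
have [_ Eq2] := divmod_uniq Eq ltac:(lia) ltac:(lia).
by move/(congr1 (modn^~ B)): Eq2; rewrite ![(_ + B * _)%N]addnC ![(B * _)%N]mulnC !modnMDl.
Qed.

Lemma sum_eq_prod_cong k1 f1 k2 f2 k3 f3 k4 f4 j :
  adm k1 f1 -> adm k2 f2 -> adm k3 f3 -> adm k4 f4 ->
  (j < k1)%N -> (j < k2)%N -> (j < k3)%N -> (j < k4)%N ->
  (nf k1 f1 + nf k2 f2 = nf k3 f3 + nf k4 f4)%N ->
  (g j.+1 %| f1 * f2 - f3 * f4)%R.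
Proof.
move=> a1 a2 a3 a4 j1 j2 j3 j4 E.
apply: dvdp_prod_of_log (g_unit_order j) (dlog_sum_congr a1 a2 a3 a4 j1 j2 j3 j4 E) _ _ _ _.
- exact: (adm_dlog j a1).2.
- exact: (adm_dlog j a2).2.
- exact: (adm_dlog j a3).2.
- exact: (adm_dlog j a4).2.
Qed.

(* A summand n2 below place 2j-1 cannot balance three summands whose indices
   exceed j: comparing the r_(j+1)-digits would give r_1 = r_3 + r_4 + carry,
   against the sum-free property of A. *)
Lemma no_small_summand k1 f1 n2 k3 f3 k4 f4 j :
  adm k1 f1 -> adm k3 f3 -> adm k4 f4 -> (0 < j)%N ->
  (j < k1)%N -> (j < k3)%N -> (j < k4)%N -> (n2 < P (2 * j).-1)%N ->
  (nf k1 f1 + n2 = nf k3 f3 + nf k4 f4)%N -> False.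
Proof.
move=> a1 a3 a4 j0 j1 j3 j4 hn2 E.
have [H1 E1] := nval_expand_r f1 j1.
have [H3 E3] := nval_expand_r f3 j3; have [H4 E4] := nval_expand_r f4 j4.
have [_ l1] := low_even_bound a1 (ltnW j1).
have [l3 _] := low_even_bound a3 (ltnW j3); have [l4 _] := low_even_bound a4 (ltnW j4).
have := l1 j0; move: l3 l4 E1 E3 E4.
set B := radix (2 * j).+1; set L1 := low k1 f1 _; set L3 := low k3 f3 _; set L4 := low k4 f4 _.
move=> l3 l4 E1 E3 E4 l1'.
have Eq : ((L1 + n2) + P (2 * j) * (dlog f1 j.+1 + B * (r f1 j.+1 + p * H1)) =
    (L3 + L4) + P (2 * j) * ((dlog f3 j.+1 + dlog f4 j.+1) +
                              B * ((r f3 j.+1 + r f4 j.+1) + p * (H3 + H4))))%N.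
  by move: E; rewrite E1 E3 E4; lia.
have [_ Eq2] := divmod_uniq Eq ltac:(lia) ltac:(lia).
have [e1 _] := adm_dlog j a1; have [e3 _] := adm_dlog j a3; have [e4 _] := adm_dlog j a4.
have e34 : (dlog f3 j.+1 + dlog f4 j.+1 < 2 * B)%N by lia.
have r1 : (r f1 j.+1 < p)%N by have := adm_r_le a1 j1; have := p_half; lia.
have r34 : ((r f3 j.+1 + r f4 j.+1).+1 < p)%N.
  by have := adm_r_le a3 j3; have := adm_r_le a4 j4; have := p_half; lia.
have [c hc Ec] := two_digit_carry e1 e34 r1 r34 Eq2.
by have := A_sumfree (adm_rA a1 j1) (adm_rA a3 j3) (adm_rA a4 j4) hc; rewrite Ec eqxx.
Qed.

Lemma small_summands_cong k1 f1 n2 k4 f4 n3 j :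
  adm k1 f1 -> adm k4 f4 -> (0 < j)%N -> (j < k1)%N -> (j < k4)%N ->
  (n2 < P (2 * j).-1)%N -> (n3 < P (2 * j).-1)%N ->
  (nf k1 f1 + n2 = nf k4 f4 + n3)%N -> (g j.+1 %| f1 - f4)%R.
Proof.
move=> a1 a4 j0 j1 j4 hn2 hn3 E.
have [H1 E1] := nval_expand_e f1 j1; have [H4 E4] := nval_expand_e f4 j4.
have [_ l1] := low_even_bound a1 (ltnW j1); have [_ l4] := low_even_bound a4 (ltnW j4).
have := l1 j0; have := l4 j0; move: E1 E4.
set B := radix (2 * j).+1; set L1 := low k1 f1 _; set L4 := low k4 f4 _.
move=> E1 E4 l4' l1'.
have Eq : ((L1 + n2) + P (2 * j) * (dlog f1 j.+1 + B * H1) =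
           (L4 + n3) + P (2 * j) * (dlog f4 j.+1 + B * H4))%N.
  by move: E; rewrite E1 E4; lia.
have [_ Eq2] := divmod_uniq Eq ltac:(lia) ltac:(lia).
have [e1 d1] := adm_dlog j a1; have [e4 d4] := adm_dlog j a4.
have [Edl _] := divmod_uniq Eq2 e1 e4.
rewrite Edl in d1.
have -> : (f1 - f4 = (w j.+1 ^+ dlog f4 j.+1 - f4) - (w j.+1 ^+ dlog f4 j.+1 - f1))%R by ring.
exact: dvdp_sub.
Qed.

Lemma g_monic_irr i : (0 < i)%N ->
  [/\ g i \is monic, irreducible_poly (g i) & size (g i) = (2 * i)%N].
Proof. by move=> hi; have [] := g_spec hi. Qed.

(* If all indices are at least m and both products have degree below m^2,
   then g_1 ... g_m (of degree m^2) divides f1 f2 - f3 f4, which therefore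
   vanishes; unique factorisation gives the pairing. *)
Lemma pairs_of_small_degree k1 f1 k2 f2 k3 f3 k4 f4 m :
  adm k1 f1 -> adm k2 f2 -> adm k3 f3 -> adm k4 f4 ->
  (m <= k1)%N -> (m <= k2)%N -> (m <= k3)%N -> (m <= k4)%N ->
  (size f1 + size f2 <= m ^ 2)%N -> (size f3 + size f4 <= m ^ 2)%N ->
  (nf k1 f1 + nf k2 f2 = nf k3 f3 + nf k4 f4)%N ->
  (f1 = f3 /\ f2 = f4) \/ (f1 = f4 /\ f2 = f3).
Proof.
move=> a1 a2 a3 a4 m1 m2 m3 m4 s12 s34 E.
have [mo1 mo2 mo3 mo4] := And4 (adm_monic a1) (adm_monic a2) (adm_monic a3) (adm_monic a4).
apply: (monic_irr_pair_eq mo1 mo2 mo3 mo4 (adm_irr a1) (adm_irr a3) (adm_irr a4)).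
apply/eqP; rewrite -subr_eq0; apply/eqP.
apply: (block_dvd_small g_monic_irr (a := 1%N) (n := m)) => //.
  move=> j /andP[h1 h2]; have -> : j = j.-1.+1 by lia.
  by apply: (sum_eq_prod_cong a1 a2 a3 a4) => //; lia.
rewrite subnn add0n exp0n // subn0.
apply: leq_trans (size_polyD _ _) _; rewrite size_polyN geq_max.
rewrite !size_monicM ?monic_neq0 //.
by rewrite !(leq_trans (leq_pred _)).
Qed.

Lemma eq_of_block_cong (f1 f4 : {poly F}) a n :
  (0 < a)%N -> (forall j, (a <= j < a + n)%N -> (g j %| f1 - f4)%R) ->
  (maxn (size f1) (size f4) <= (a - 1 + n) ^ 2 - (a - 1) ^ 2)%N -> f1 = f4.
Proof.
move=> ha hd hs; apply/eqP; rewrite -subr_eq0; apply/eqP.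
apply: (block_dvd_small g_monic_irr ha hd).
by apply: leq_trans (size_polyD _ _) _; rewrite size_polyN.
Qed.

Lemma adm_ge200 k f : adm k f -> (200 <= k)%N.
Proof. by case=> hk _; apply: leq_trans C0_large hk. Qed.

Lemma nval_lt_place k f t : adm k f -> ((2 * k).+3 <= t)%N -> (nf k f < P t)%N.
Proof. by move=> hkf ht; apply: leq_trans (nval_lt hkf) (P_mono ht). Qed.

(* Indices all within 3 of the smallest one, m: the degrees of f1 f2 and
   f3 f4 are about 0.7 m^2 < m^2. *)
Lemma close_indices k1 f1 m f2 k3 f3 k4 f4 :
  adm k1 f1 -> adm m f2 -> adm k3 f3 -> adm k4 f4 ->
  (m <= k1 <= m + 3)%N -> (m <= k3 <= m + 3)%N -> (m <= k4 <= m + 3)%N ->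
  (nf k1 f1 + nf m f2 = nf k3 f3 + nf k4 f4)%N ->
  (f1 = f3 /\ f2 = f4) \/ (f1 = f4 /\ f2 = f3).
Proof.
move=> a1 a2 a3 a4 /andP[m1 c1] /andP[m3 c3] /andP[m4 c4] E.
have hm := adm_ge200 a2.
have s1 := adm_size_le a1 c1; have s3 := adm_size_le a3 c3; have s4 := adm_size_le a4 c4.
have s2 : (20 * size f2 < 7 * (m + 3).+1 ^ 2 + 20)%N by apply: adm_size_le a2 _; lia.
have sq : ((m + 3).+1 ^ 2 = m ^ 2 + 8 * m + 16)%N by ring.
have mm : (200 * m <= m ^ 2)%N by rewrite expnS expn1 mulnC leq_mul2l hm orbT.
by apply: (pairs_of_small_degree a1 a2 a3 a4 (m := m)) => //; lia.
Qed.

(* Mixed case, first half: the two large indices (K or K+1) are below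
   sqrt(5/3) m, so the degrees of both products are still below m^2. *)
Lemma mixed_near k1 f1 m f2 k3 f3 k4 f4 K :
  adm k1 f1 -> adm m f2 -> adm k3 f3 -> adm k4 f4 ->
  (m <= k3 <= m + 2)%N -> (m <= K)%N -> (K <= k1 <= K.+1)%N -> (K <= k4 <= K.+1)%N ->
  (3 * K ^ 2 < 5 * m ^ 2)%N ->
  (nf k1 f1 + nf m f2 = nf k3 f3 + nf k4 f4)%N ->
  (f1 = f3 /\ f2 = f4) \/ (f1 = f4 /\ f2 = f3).
Proof.
move=> a1 a2 a3 a4 /andP[m3 c3] mK /andP[K1 c1] /andP[K4 c4] hK E.
have hm := adm_ge200 a2.
have s1 := adm_size_le a1 c1; have s4 := adm_size_le a4 c4.
have s2 := adm_size_le a2 (leqnn m); have s3 := adm_size_le a3 c3.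
have sqK : (K.+2 ^ 2 = K ^ 2 + 4 * K + 4)%N by ring.
have sqm1 : (m.+1 ^ 2 = m ^ 2 + 2 * m + 1)%N by ring.
have sqm3 : ((m + 2).+1 ^ 2 = m ^ 2 + 6 * m + 9)%N by ring.
have mm : (200 * m <= m ^ 2)%N by rewrite expnS expn1 mulnC leq_mul2l hm orbT.
have hK2 : (K <= 2 * m)%N.
  case: (leqP K (2 * m)) => // h.
  have : ((2 * m) ^ 2 <= K ^ 2)%N by rewrite leq_exp2r //; lia.
  have -> : ((2 * m) ^ 2 = 4 * m ^ 2)%N by ring.
  lia.
have Km : (K * m <= 2 * m ^ 2)%N by nia.
have KK2 : (K ^ 2 <= 2 * K * m)%N by nia.
by apply: (pairs_of_small_degree a1 a2 a3 a4 (m := m)) => //; lia.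
Qed.

(* Mixed case, second half: the large indices exceed the small ones so much
   that f1 = f4 modulo g_j for all m+5 <= j <= K already forces f1 = f4;
   then n_(f2) = n_(f3) and f2 = f3. *)
Lemma mixed_far k1 f1 m f2 k3 f3 k4 f4 K :
  adm k1 f1 -> adm m f2 -> adm k3 f3 -> adm k4 f4 ->
  (m <= k3 <= m + 2)%N -> (m + 3 <= K)%N -> (K <= k1 <= K.+1)%N -> (K <= k4 <= K.+1)%N ->
  (5 * m ^ 2 <= 3 * K ^ 2)%N ->
  (nf k1 f1 + nf m f2 = nf k3 f3 + nf k4 f4)%N ->
  f1 = f4 /\ f2 = f3.
Proof.
move=> a1 a2 a3 a4 /andP[m3 c3] mK /andP[K1 c1] /andP[K4 c4] hK E.
have hm := adm_ge200 a2.
have KK : (200 * K <= K ^ 2)%N by rewrite expnS expn1 mulnC leq_mul2l; apply/orP; right; lia.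
have sqK : (K.+2 ^ 2 = K ^ 2 + 4 * K + 4)%N by ring.
have sqm4 : ((m + 4) ^ 2 = m ^ 2 + 8 * m + 16)%N by ring.
have mm : (200 * m <= m ^ 2)%N by rewrite expnS expn1 mulnC leq_mul2l hm orbT.
have hKm : (m + 40 <= K)%N.
  case: (leqP (m + 40) K) => // h.
  have : (K ^ 2 <= (m + 39) ^ 2)%N by rewrite leq_exp2r //; lia.
  have -> : ((m + 39) ^ 2 = m ^ 2 + 78 * m + 1521)%N by ring.
  lia.
have e14 : f1 = f4.
  apply: (eq_of_block_cong (a := m + 5) (n := K - m - 4)); first by lia.
    move=> j /andP[ja jb]; have -> : j = j.-1.+1 by lia.
    apply: (small_summands_cong a1 a4 (n2 := nf m f2) (n3 := nf k3 f3)); try lia.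
    + by apply: nval_lt_place a2 _; lia.
    + by apply: nval_lt_place a3 _; lia.
  have -> : (m + 5 - 1 + (K - m - 4) = K)%N by lia.
  have -> : (m + 5 - 1 = m + 4)%N by lia.
  have s1 := adm_size_le a1 c1; have s4 := adm_size_le a4 c4.
  by rewrite geq_max; apply/andP; split; lia.
split=> //; subst f4.
have ek : k1 = k4 by apply: adm_index_uniq a1 a4.
subst k4.
have E2 : (nf m f2 + nf m f2 = nf k3 f3 + nf k3 f3)%N by lia.
have s2 := adm_size_le a2 (leqnn m); have s3 := adm_size_le a3 c3.
have sqm1 : (m.+1 ^ 2 = m ^ 2 + 2 * m + 1)%N by ring.
have sqm3 : ((m + 2).+1 ^ 2 = m ^ 2 + 6 * m + 9)%N by ring.
have [[-> _]|[-> _]] := pairs_of_small_degree a2 a2 a3 a3 (leqnn m) (leqnn m) m3 m3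
  ltac:(lia) ltac:(lia) E2; by [].
Qed.

Lemma index_le_succ k1 f1 k4 f4 n2 n3 : adm k1 f1 -> adm k4 f4 ->
  (n3 < P (2 * k4).+3)%N -> (nf k1 f1 + n2 = nf k4 f4 + n3)%N -> (k1 <= k4.+1)%N.
Proof.
move=> a1 a4 hn3 E.
have : (2 * k1 <= (2 * k4).+3)%N by apply: (index_le_of_lt a1); have := nval_lt a4; lia.
lia.
Qed.

Lemma mixed_indices k1 f1 m f2 k3 f3 k4 f4 :
  adm k1 f1 -> adm m f2 -> adm k3 f3 -> adm k4 f4 ->
  (m <= k3 <= m + 2)%N -> (m + 3 <= k1)%N -> (m + 3 <= k4)%N ->
  (nf k1 f1 + nf m f2 = nf k3 f3 + nf k4 f4)%N ->
  (f1 = f3 /\ f2 = f4) \/ (f1 = f4 /\ f2 = f3).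
Proof.
move=> a1 a2 a3 a4 hk3 h1 h4 E; have /andP[m3 c3] := hk3.
have c14 : (k1 <= k4.+1)%N.
  apply: (index_le_succ a1 a4 (n2 := nf m f2) (n3 := nf k3 f3)); last by lia.
  by apply: nval_lt_place a3 _; lia.
have c41 : (k4 <= k1.+1)%N.
  apply: (index_le_succ a4 a1 (n2 := nf k3 f3) (n3 := nf m f2)); last by lia.
  by apply: nval_lt_place a2 _; lia.
set K := minn k1 k4.
have K1 : (K <= k1 <= K.+1)%N by rewrite /K; case: (leqP k1 k4) => h; lia.
have K4 : (K <= k4 <= K.+1)%N by rewrite /K; case: (leqP k1 k4) => h; lia.
have mK : (m + 3 <= K)%N by rewrite /K; case: (leqP k1 k4) => h; lia.
case: (ltnP (3 * K ^ 2) (5 * m ^ 2)) => hK.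
  by apply: (mixed_near a1 a2 a3 a4 hk3 _ K1 K4 hK E); lia.
by right; apply: (mixed_far a1 a2 a3 a4 hk3 mK K1 K4 hK E).
Qed.

Lemma min_index_case k1 f1 m f2 k3 f3 k4 f4 :
  adm k1 f1 -> adm m f2 -> adm k3 f3 -> adm k4 f4 ->
  (m <= k1)%N -> (m <= k3)%N -> (m <= k4)%N ->
  (nf k1 f1 + nf m f2 = nf k3 f3 + nf k4 f4)%N ->
  (f1 = f3 /\ f2 = f4) \/ (f1 = f4 /\ f2 = f3).
Proof.
move=> a1 a2 a3 a4 m1 m3 m4 E.
(* a summand of index at most m+2 lies below place 2m+7, and a sum of two
   such forces every index to be at most m+3 *)
have small k f : adm k f -> (k <= m + 2)%N -> (nf k f < P (2 * m + 7))%N.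
  by move=> akf hk; apply: nval_lt_place akf _; lia.
have n2_lt := small _ _ a2 (leq_addr 2 m).
have bounded k f : adm k f -> (nf k f < 2 * P (2 * m + 7))%N -> (k <= m + 3)%N.
  by move=> akf hlt; have := index_le_of_lt akf hlt; lia.
case: (leqP k1 (m + 2)) => c1.
  have n1_lt := small _ _ a1 c1.
  have c3 : (k3 <= m + 3)%N by apply: (bounded _ _ a3); lia.
  have c4 : (k4 <= m + 3)%N by apply: (bounded _ _ a4); lia.
  by apply: (close_indices a1 a2 a3 a4) E; lia.
case: (leqP (m + 3) k3) => c3; case: (leqP (m + 3) k4) => c4.
- case: (no_small_summand (j := m + 2) a1 a3 a4 _ _ _ _ _ E); try lia.
  by apply: nval_lt_place a2 _; lia.
- have E' : (nf k1 f1 + nf m f2 = nf k4 f4 + nf k3 f3)%N by lia.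
  have [[? ?]|[? ?]] := mixed_indices a1 a2 a4 a3 ltac:(lia) ltac:(lia) c3 E'.
  + by right.
  + by left.
- by apply: (mixed_indices a1 a2 a3 a4) E; lia.
- have n3_lt := small _ _ a3 ltac:(lia); have n4_lt := small _ _ a4 ltac:(lia).
  have c1' : (k1 <= m + 3)%N by apply: (bounded _ _ a1); lia.
  by apply: (close_indices a1 a2 a3 a4) E; lia.
Qed.

Lemma sum_eq_pairs k1 f1 k2 f2 k3 f3 k4 f4 :
  adm k1 f1 -> adm k2 f2 -> adm k3 f3 -> adm k4 f4 ->
  (nf k1 f1 + nf k2 f2 = nf k3 f3 + nf k4 f4)%N ->
  (f1 = f3 /\ f2 = f4) \/ (f1 = f4 /\ f2 = f3).
Proof.
move=> a1 a2 a3 a4 E.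
have : [\/ (k1 <= k2 /\ k1 <= k3 /\ k1 <= k4)%N, (k2 <= k1 /\ k2 <= k3 /\ k2 <= k4)%N,
          (k3 <= k1 /\ k3 <= k2 /\ k3 <= k4)%N | (k4 <= k1 /\ k4 <= k2 /\ k4 <= k3)%N].
  case: (leqP k1 k2) => ?; case: (leqP k1 k3) => ?; case: (leqP k1 k4) => ?;
  case: (leqP k2 k3) => ?; case: (leqP k2 k4) => ?; case: (leqP k3 k4) => ?;
  first [ by apply: Or41; lia | by apply: Or42; lia | by apply: Or43; lia
        | by apply: Or44; lia | lia ].
case=> [[b [c d]]|[b [c d]]|[b [c d]]|[b [c d]]].
- have E' : (nf k2 f2 + nf k1 f1 = nf k3 f3 + nf k4 f4)%N by lia.
  by have [[-> ->]|[-> ->]] := min_index_case a2 a1 a3 a4 b c d E'; [right|left].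
- exact: min_index_case a1 a2 a3 a4 b c d E.
- have E' : (nf k4 f4 + nf k3 f3 = nf k2 f2 + nf k1 f1)%N by lia.
  by have [[-> ->]|[-> ->]] := min_index_case a4 a3 a2 a1 d c b E'; [left|right].
- have E' : (nf k3 f3 + nf k4 f4 = nf k1 f1 + nf k2 f2)%N by lia.
  by have [[-> ->]|[-> ->]] := min_index_case a3 a4 a1 a2 d b c E'; [left|right].
Qed.

Lemma nval_sidon :
  Sidon (fun n => exists (k : nat) (f : {poly F}), (C0 <= k)%N /\ inFk k f /\ n = nf k f).
Proof.
split.
  move=> n [k [f [hk [hf ->]]]].
  exact: leq_trans (P_gt0 (2 * k)) (nval_ge (conj hk hf)).
move=> a b c d [ka [fa [ha1 [ha2 ->]]]] [kb [fb [hb1 [hb2 ->]]]]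
  [kc [fc [hc1 [hc2 ->]]]] [kd [fd [hd1 [hd2 ->]]]] hab hcd E.
have [aa ab ac ad] := And4 (conj ha1 ha2) (conj hb1 hb2) (conj hc1 hc2) (conj hd1 hd2).
have [[e1 e2]|[e1 e2]] := sum_eq_pairs aa ab ac ad E; subst fc fd.
- by rewrite (adm_index_uniq ac aa) (adm_index_uniq ad ab).
- rewrite (adm_index_uniq ac ab) (adm_index_uniq ad aa) in hcd *.
  by split; lia.
Qed.

End Construction.

Unset Implicit Arguments.

Theorem lemma4p1 (p : nat) (A : seq nat) :
  prime p -> good_A p A ->
  exists Cbound : nat, forall C0 : nat, (Cbound <= C0)%N -> (100 * p < C0)%N ->
  forall F : finFieldType, (C0 <= #|F|)%N ->
  forall g w : nat -> {poly F},
  (forall i : nat, (0 < i)%N ->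
     [/\ g i \is monic, irreducible_poly (g i), size (g i) = (2 * i)%N & is_gen (g i) (w i)]) ->
  forall (r : {poly F} -> nat -> nat) (s : {poly F} -> nat),
  (forall (k : nat) (f : {poly F}), (C0 <= k)%N -> inFk k f ->
     (forall i, (1 <= i <= k)%N -> r f i \in A) /\ (1 <= s f <= #|F| ^ (3 * k))%N) ->
  (forall (f1 f2 f3 f4 : {poly F}) (k1 k2 k3 k4 : nat),
     (C0 <= k1)%N -> (C0 <= k2)%N -> (C0 <= k3)%N -> (C0 <= k4)%N ->
     inFk k1 f1 -> inFk k2 f2 -> inFk k3 f3 -> inFk k4 f4 ->
     (nval p g w r s k1 f1 + nval p g w r s k2 f2 = nval p g w r s k3 f3 + nval p g w r s k4 f4)%N ->
     (f1 = f3 /\ f2 = f4) \/ (f1 = f4 /\ f2 = f3)) /\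
  Sidon (fun n => exists (k : nat) (f : {poly F}), (C0 <= k)%N /\ inFk k f /\ n = nval p g w r s k f).
Proof.
move=> p_prime [A_range [A_sumfree _]].
exists 200%N => C0 C0_large _ F q_large g w g_spec r s rs_spec.
have p_ge2 : (1 < p)%N := prime_gt1 p_prime.
have A_small a : a \in A -> (a <= p./2 - 1)%N by move/A_range/andP=> [].
split; last exact: nval_sidon p_ge2 A_small A_sumfree C0_large q_large g_spec rs_spec.
move=> f1 f2 f3 f4 k1 k2 k3 k4 c1 c2 c3 c4 i1 i2 i3 i4.
exact: (sum_eq_pairs p_ge2 A_small A_sumfree C0_large q_large g_spec rs_spec
          (conj c1 i1) (conj c2 i2) (conj c3 i3) (conj c4 i4)).
Qed.
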